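(* Let $\mu$ be an admissible even Borel probability measure on $\mathbb{R}$. Then $\lim_{x\uparrow x^{\ast}}\Lambda_\mu^{\ast}(x)=+\infty$.
   Context: Let $X$ have distribution $\mu$. Write $x^{\ast}=\sup\{x\in\mathbb{R}:\mu([x,\infty))>0\}$ (possibly $+\infty$), $\Lambda_\mu(t)=\ln\int e^{tx}\,d\mu(x)$ and $\Lambda_\mu^{\ast}(x)=\sup_{t\in\mathbb{R}}\{tx-\Lambda_\mu(t)\}$. The measure $\mu$ is admissible if: $\mathrm{Var}(X)>0$; there is $r>0$ with $\mathbb{E}e^{tX}<\infty$ for $t\in(-r,r)$; if $x^{\ast}<\infty$ then $\mu(\{x^{\ast}\})=0$; and one of: (1) $x^{\ast}<\infty$, (2) $x^{\ast}=+\infty$ and $\{\Lambda_\mu<\infty\}=\mathbb{R}$, (3) $x^{\ast}=+\infty$, $\{\Lambda_\mu<\infty\}$ bounded and $\mu$ log-concave. *)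

From HB Require Import structures.
From mathcomp Require Import all_boot all_order all_algebra.
From mathcomp Require Import all_classical all_reals all_analysis.
Set Implicit Arguments. Unset Strict Implicit. Unset Printing Implicit Defensive.
Import Order.TTheory GRing.Theory Num.Theory.
Import numFieldNormedType.Exports.
Local Open Scope classical_set_scope.
Local Open Scope ring_scope.

(* Borel probability measures on R: [probability R R] for the canonical
   (Borel) measurable structure on the real line. X is the identity. *)

Section defs.
Variable R : realType.
Variable mu : probability R R.

Definition mgf (t : R) : \bar R := mmt_gen_fun mu id t.

Definition Lambda (t : R) : \bar R :=
  match mgf t with
  | x%:E => (ln x)%:E
  | +oo%E => +oo%E
  | -oo%E => -oo%E
  end.

Definition Lambda_star (x : R) : \bar R :=
  ereal_sup [set ((t * x)%:E - Lambda t)%E | t in [set: R]].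

Definition xstar : \bar R :=
  ereal_sup [set x%:E | x in [set x : R | (0 < mu [set` `[x, +oo[])%E]].

Definition even_measure : Prop :=
  forall A : set R, measurable A -> mu [set - x | x in A] = mu A.

Definition log_concave_measure : Prop :=
  forall (A B : set R) (l : R), measurable A -> measurable B ->
    0 < l < 1 ->
    measurable [set l * a + (1 - l) * b | a in A & b in B] ->
    (((fine (mu A) `^ l) * (fine (mu B) `^ (1 - l)))%:E <=
      mu [set (l * a + (1 - l) * b)%R | a in A & b in B])%E.

Definition admissible : Prop :=
  [/\ (0 < variance mu id)%E,
      (exists2 r : R, 0 < r & forall t : R, - r < t < r -> (mgf t < +oo)%E),
      (forall x : R, xstar = x%:E -> mu [set x] = 0%E) &
      [\/ (exists x : R, xstar = x%:E),
          xstar = +oo%E /\ (forall t : R, (Lambda t < +oo)%E) |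
          [/\ xstar = +oo%E,
              (exists M : R, forall t : R, (Lambda t < +oo)%E -> `|t| <= M) &
              log_concave_measure]]].

End defs.

From HB Require Import structures.
From mathcomp Require Import all_boot all_order all_algebra.
From mathcomp Require Import all_classical all_reals all_analysis.
From mathcomp Require Import measurable_realfun ring lra.
Set Implicit Arguments.
Unset Strict Implicit.
Unset Printing Implicit Defensive.
Import Order.TTheory GRing.Theory Num.Theory.
Import numFieldNormedType.Exports.
Local Open Scope classical_set_scope.
Local Open Scope ring_scope.

(* Since [Lambda_star x >= t x - Lambda t] for every [t], it suffices to find,
   for each [M], some [t >= 0] with [ln E e^{tX} <= t x - M].
   If [x* = +oo], one [t > 0] with [E e^{tX} < +oo] does it for all large [x].
   If [x*] is finite, there is no atom at [x*], so [X < x*] almost surely. For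
   [y < x*] and [t >= 0] this gives [E e^{tX} <= e^{ty} + e^{t x*} P(X > y)].
   Choose [y] with [P(X > y) <= e^{-(M+1)}/2] and [t = 2(M+1)/(x* - y)]; once
   [x* - x <= min((x* - y)/2, 1/t)], each term is at most [e^{tx - M}/2]. *)

Lemma expR_two_term_le (R : realType) (M a p : R) :
  a <= 1 -> a <= M + 1 -> 0 <= p -> p <= expR (- (M + 1)) / 2 ->
  expR (a - 2 * (M + 1)) + expR a * p <= expR (- M).
Proof.
move=> a1 aM p0 hp.
have e_ge2 : 2 <= expR 1 :> R by have := expR_ge1Dx (1 : R); lra.
have eM : expR (- M) = expR 1 * expR (- (M + 1)) by rewrite -expRD; congr expR; lra.
have first_le : expR (a - 2 * (M + 1)) <= expR (- (M + 1)) by rewrite ler_expR; lra.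
have second_le : expR a * p <= expR 1 * (expR (- (M + 1)) / 2).
  by apply: ler_pM; rewrite ?expR_ge0 ?ler_expR.
have := expR_gt0 (- (M + 1)); rewrite eM; nra.
Qed.

Section mgf.
Context (R : realType) (mu : probability R R).
Local Open Scope ereal_scope.

Lemma mgfE t : mgf mu t = \int[mu]_x (expR (x * t))%:E.
Proof. by rewrite /mgf /mmt_gen_fun unlock. Qed.

Lemma measurable_expRM t : measurable_fun [set: R] (fun x => expR (x * t)).
Proof. by apply: measurableT_comp => //; exact: measurable_funM. Qed.

Lemma mgf_ge0 t : 0 <= mgf mu t.
Proof. by rewrite mgfE; apply: integral_ge0 => x _; rewrite lee_fin expR_ge0. Qed.

Lemma Lambda_star_ge t x : (t * x)%:E - Lambda mu t <= Lambda_star mu x.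
Proof. by apply: ereal_sup_ubound; exists t. Qed.

Lemma exists_measure_itvcy_gt0 : exists z : R, 0 < mu `[z, +oo[%classic.
Proof.
apply: contrapT => /forallNP null_rays.
have : mu.-negligible (\bigcup_n `[(- (n%:R : R))%R, +oo[%classic).
  apply: negligible_bigcup => n; apply/negligibleP => //.
  by apply/eqP; rewrite -measure_le0 leNgt; exact/negP/null_rays.
have coverT : [set: R] `<=` \bigcup_n `[(- (n%:R : R))%R, +oo[%classic.
  move=> x _; exists (Num.truncn (- x)).+1 => //=.
  by rewrite in_itv /= andbT lerNl ltW // truncnS_gt.
move=> /(negligibleS coverT)/(negligibleP _ measurableT).
move=> muT0; have := probability_setT mu.
by rewrite muT0 => /eqP; rewrite eq_sym onee_eq0.
Qed.

Lemma integral_cst_indic (k : R) (A : set R) : measurable A -> (0 <= k)%R ->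
  \int[mu]_x (k%:E * (\1_A x)%:E) = k%:E * mu A.
Proof.
move=> mA k0; rewrite ge0_integralZl_EFin //.
  by rewrite (integral_indic _ _ mA) //; congr (_ * mu _); exact: setIT.
exact/measurable_EFinP/measurable_indic.
Qed.

Lemma integral_cst_probability (c : \bar R) : \int[mu]_x c = c.
Proof. by rewrite integral_cst // -[RHS]mule1; congr (_ * _); exact: probability_setT. Qed.

Lemma mgf_gt0 t : (0 <= t)%R -> 0 < mgf mu t.
Proof.
move=> t0; have [z muz] := exists_measure_itvcy_gt0.
apply: (@lt_le_trans _ _ ((expR (z * t))%:E * mu `[z, +oo[%classic)).
  by rewrite mule_gt0 // lte_fin expR_gt0.
rewrite -integral_cst_indic ?expR_ge0 // mgfE.
apply: ge0_le_integral => //.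
- apply: emeasurable_funM => //; exact/measurable_EFinP/measurable_indic.
- by apply/measurable_EFinP; exact: measurable_expRM.
move=> x _; rewrite -EFinM lee_fin indicE.
have [zx|xz] := lerP z x.
  by rewrite mem_set /= ?in_itv /= ?zx // mulr1 ler_expR ler_wpM2r.
by rewrite memNset ?mulr0 ?expR_ge0 //= in_itv /= andbT; apply/negP; rewrite -ltNge.
Qed.

Lemma Lambda_star_ge_mgf_le t x c : (0 <= t)%R -> mgf mu t <= (expR c)%:E ->
  (t * x - c)%:E <= Lambda_star mu x.
Proof.
move=> t0 mgfc; have mgf0 := mgf_gt0 t0.
have mgf_fin : mgf mu t = (fine (mgf mu t))%:E.
  by rewrite fineK // ge0_fin_numE ?(ltW mgf0) // (le_lt_trans mgfc) ?ltry.
have LambdaE : Lambda mu t = (ln (fine (mgf mu t)))%:E by rewrite /Lambda mgf_fin.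
apply: le_trans (Lambda_star_ge t x); rewrite LambdaE -EFinB lee_fin lerB //.
(* [ln] is only monotone on positive reals, hence [mgf_gt0]. *)
rewrite -[leRHS]expRK ler_ln ?posrE ?expR_gt0 -?lte_fin -?lee_fin -?mgf_fin //.
Qed.

Lemma Lambda_star_cvgy t : (0 < t)%R -> mgf mu t < +oo ->
  Lambda_star mu x @[x --> +oo%R] --> +oo.
Proof.
move=> t0 mgft; apply/cvgeyPge => A; pose m := fine (mgf mu t).
have m0 : (0 < m)%R by rewrite fine_gt0 // mgf_gt0 ?ltW.
have mgf_le : mgf mu t <= (expR (ln m))%:E.
  by rewrite lnK ?posrE // fineK // ge0_fin_numE ?mgf_ge0.
near=> x.
apply: le_trans (Lambda_star_ge_mgf_le x (ltW t0) mgf_le); rewrite lee_fin.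
have : ((A + ln m) / t <= x)%R by near: x; apply: nbhs_pinfty_ge; exact: num_real.
rewrite ler_pdivrMr // mulrC; lra.
Unshelve. all: by end_near.
Qed.

Lemma mgf_le_split x0 y t : (0 <= t)%R -> mu `]x0, +oo[%classic = 0 ->
  mgf mu t <= (expR (y * t) + expR (x0 * t) * fine (mu `]y, +oo[%classic))%:E.
Proof.
move=> t0 mu_gtx0; set A := `]y, +oo[%classic.
have mA : measurable A by exact: measurable_itv.
have pointwise x : (x <= x0)%R ->
    (expR (x * t))%:E <= (expR (y * t))%:E + (expR (x0 * t))%:E * (\1_A x)%:E.
  move=> xx0; rewrite -EFinM -EFinD lee_fin indicE.
  have [yx|xy] := ltrP y x.
    rewrite mem_set /A /= ?in_itv /= ?yx // mulr1 -[leLHS]add0r.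
    by rewrite lerD ?expR_ge0 // ler_expR ler_wpM2r.
  rewrite memNset ?mulr0 ?addr0 ?ler_expR ?ler_wpM2r // /A /= in_itv /= andbT.
  by apply/negP; rewrite -leNgt.
rewrite mgfE; apply: (@le_trans _ _
  (\int[mu]_x ((expR (y * t))%:E + (expR (x0 * t))%:E * (\1_A x)%:E))).
  apply: ae_ge0_le_integral => //.
  - by apply/measurable_EFinP; exact: measurable_expRM.
  - by move=> x _; rewrite adde_ge0 // -EFinM lee_fin mulr_ge0 ?expR_ge0.
  - apply: emeasurable_funD => //; apply: emeasurable_funM => //.
    exact/measurable_EFinP/measurable_indic.
  - apply: negligibleS (proj2 (negligibleP _ _) mu_gtx0) => // x /= bad.
    rewrite in_itv /= andbT ltNge; apply/negP => xx0.
    by apply: bad => _; exact: pointwise.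
rewrite ge0_integralD //; last first.
  by apply: emeasurable_funM => //; exact/measurable_EFinP/measurable_indic.
rewrite integral_cst_indic ?expR_ge0 // integral_cst_probability.
by rewrite -[mu A]fineK ?fin_num_measure.
Qed.

Lemma xstar_ge x : 0 < mu `[x, +oo[%classic -> x%:E <= xstar mu.
Proof. by move=> mux; apply: ereal_sup_ubound; exists x. Qed.

Lemma xstar_neNy : xstar mu != -oo.
Proof.
have [z /xstar_ge] := exists_measure_itvcy_gt0.
by apply: contraTneq => ->; rewrite leeNy_eq.
Qed.

Lemma measure_itvoy_xstar x0 : xstar mu = x0%:E -> mu `]x0, +oo[%classic = 0.
Proof.
move=> xstarE; rewrite itvoyEbigcup; apply/negligibleP.
  by apply: bigcupT_measurable => k; exact: measurable_itv.
apply: negligible_bigcup => k; apply/negligibleP => //.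
apply/eqP; rewrite -measure_le0 leNgt; apply/negP => /xstar_ge.
by rewrite xstarE lee_fin; apply/negP; rewrite -ltNge ltrDl invr_gt0 ltr0Sn.
Qed.

Lemma measure_itvcy_xstar x0 : xstar mu = x0%:E -> mu [set x0] = 0 ->
  mu `[x0, +oo[%classic = 0.
Proof.
move=> xstarE mux0; rewrite -(@setU1itv _ _ _ _ false) //.
apply/negligibleP; first exact: measurableU.
by apply: negligibleU; apply/negligibleP => //; exact: measure_itvoy_xstar.
Qed.

Lemma cvg_measure_itvoy_left x0 :
  mu `](x0 - k.+1%:R^-1)%R, +oo[%classic @[k --> \oo] --> mu `[x0, +oo[%classic.
Proof.
rewrite itvcyEbigcap; apply: nonincreasing_cvg_mu => //.
- by rewrite ltey_eq fin_num_measure.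
- by apply: bigcapT_measurable => k; exact: measurable_itv.
move=> m n mn; apply/subsetPset; apply: subitvPl.
by rewrite bnd_simp lerB // lef_pV2 ?posrE // ler_nat ltnS.
Qed.

Lemma exists_measure_itvoy_lt x0 eps : mu `[x0, +oo[%classic = 0 -> (0 < eps)%R ->
  exists2 y, (y < x0)%R & (fine (mu `]y, +oo[%classic) < eps)%R.
Proof.
move=> mu0 eps0; have := cvg_measure_itvoy_left (x0 := x0); rewrite mu0.
move=> /fine_cvgP[_ /cvgr_lt/(_ eps eps0)][N _ muN].
exists (x0 - N.+1%:R^-1)%R; last exact: (muN N (leqnn N)).
by rewrite ltrBlDr ltrDl invr_gt0.
Qed.

Lemma Lambda_star_cvg_left x0 : mu `[x0, +oo[%classic = 0 ->
  Lambda_star mu x @[x --> x0^'-] --> +oo.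
Proof.
move=> mu0; apply/cvgeyPge => A; pose M : R := `|A|%R.
have eps0 : (0 < expR (- (M + 1)) / 2)%R by rewrite divr_gt0 ?expR_gt0.
have [y yx0 py] := exists_measure_itvoy_lt mu0 eps0.
pose t := (2 * (M + 1) / (x0 - y))%R.
have M1 : (0 < M + 1)%R by rewrite ltr_pwDr //; exact: normr_ge0.
have t0 : (0 < t)%R by rewrite /t divr_gt0 ?subr_gt0 // mulr_gt0.
have td : (t * (x0 - y) = 2 * (M + 1))%R by rewrite divfK // subr_eq0 gt_eqF.
have mu_gtx0 : mu `]x0, +oo[%classic = 0.
  apply/eqP; rewrite -measure_le0 -mu0 le_measure ?inE //.
  by apply: subitvPl; rewrite bnd_simp.
have mgf_le := mgf_le_split y (ltW t0) mu_gtx0.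
near=> x.
have at1 : (t * (x0 - x) <= 1)%R.
  rewrite -(mulfV (lt0r_neq0 t0)) ler_wpM2l ?ltW //.
  by near: x; apply: nbhs_left_ltBl; rewrite invr_gt0.
have atM : (t * (x0 - x) <= M + 1)%R.
  have : (x0 - x < (x0 - y) / 2)%R.
    by near: x; apply: nbhs_left_ltBl; rewrite divr_gt0 ?subr_gt0.
  move=> /ltW/(ler_wpM2l (ltW t0)); lra.
apply: le_trans (Lambda_star_ge_mgf_le x (c := (t * x - M)%R) (ltW t0) _).
  by rewrite lee_fin opprB addrCA subrr addr0 ler_norm.
apply: le_trans mgf_le _; rewrite lee_fin.
have := expR_two_term_le at1 atM (fine_ge0 (measure_ge0 _ _)) (ltW py).
move=> /(ler_wpM2l (expR_ge0 (t * x))); rewrite mulrDr mulrA -!expRD.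
have -> : (t * x + (t * (x0 - x) - 2 * (M + 1)) = y * t)%R by rewrite -td; ring.
by have -> : (t * x + t * (x0 - x) = x0 * t)%R by ring.
Unshelve. all: by end_near.
Qed.

End mgf.

Theorem corollary2p5 (R : realType) (mu : probability R R) :
  even_measure mu -> admissible mu ->
  match xstar mu with
  | x0%:E => Lambda_star mu x @[x --> x0^'-] --> +oo%E
  | +oo%E => Lambda_star mu x @[x --> +oo] --> +oo%E
  | -oo%E => False
  end.
Proof.
move=> _ [_ [r r0 mgf_fin] no_atom _].
case xstarE: (xstar mu) => [x0| |].
- exact/Lambda_star_cvg_left/measure_itvcy_xstar/no_atom.
- apply: (@Lambda_star_cvgy _ mu (r / 2)); first by rewrite divr_gt0.
  by apply: mgf_fin; lra.
- by have := xstar_neNy mu; rewrite xstarE.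
Qed.
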